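(* Let $\pi\in\mathcal{S}_n$ be a Schröder permutation, and let $\mathcal{E}^*(\pi)$ be the set obtained from $\mathcal{E}(\pi)$ by replacing every element $(i,j)\in\mathcal{E}_1(\pi)$ by $(i-1,j-1)$. Then $\mathcal{E}^*(\pi)$ is a ranked essential set with all ranks equal to $0$: there exists a permutation $\sigma\in\mathcal{S}_n$ with $\mathcal{E}(\sigma)=\mathcal{E}^*(\pi)$ and $\rho_\sigma(i,j)=0$ for every $(i,j)\in\mathcal{E}(\sigma)$; in particular, $\sigma$ avoids $132$.
   Context: A permutation $\pi$ avoids a pattern $\tau\in\mathcal{S}_k$ if no subsequence $\pi_{i_1}\cdots\pi_{i_k}$ ($i_1<\dots<i_k$) is in the same relative order as $\tau$. A Schröder permutation is a permutation avoiding both $1243$ and $2143$. Represent $\pi\in\mathcal{S}_n$ by an $n\times n$ array, rows $i$ numbered top to bottom, columns $j$ left to right, with a dot in square $(i,\pi_i)$. The diagram $D(\pi)$ is the set of squares $(i,j)$ with $\pi_i>j$ and $\pi^{-1}(j)>i$. The essential set $\mathcal{E}(\pi)$ is the set of $(i,j)\in D(\pi)$ with $(i+1,j)\notin D(\pi)$ and $(i,j+1)\notin D(\pi)$ (squares outside the array count as not in $D(\pi)$). The rank (with respect to $\pi$) of a square $(i,j)$ is $\rho_\pi(i,j)=\#\{k<i:\pi_k<j\}$, and $\mathcal{E}_r(\pi)=\{(i,j)\in\mathcal{E}(\pi):\rho_\pi(i,j)=r\}$. *)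

From mathcomp Require Import all_boot all_fingroup.
Set Implicit Arguments. Unset Strict Implicit. Unset Printing Implicit Defensive.

(* Conventions: a permutation of {1..n} is p : 'S_n acting on 'I_n = {0..n-1};
   rows/columns are 0-based here (row i, column j of the paper correspond to
   i-1, j-1).  Squares are pairs of naturals; squares outside the array are
   never in the diagram. *)

(* value of p at position i (only meaningful for i < n) *)
Definition pval n (p : 'S_n) (i : nat) : nat :=
  if @insub _ (fun k => k < n) 'I_n i is Some k then val (p k) else n.
(* position of the value j, i.e. p^{-1}(j) (only meaningful for j < n) *)
Definition pinv n (p : 'S_n) (j : nat) : nat :=
  if @insub _ (fun k => k < n) 'I_n j is Some k then val ((p^-1)%g k) else n.

Definition diag n (p : 'S_n) (i j : nat) : bool :=
  [&& i < n, j < n, j < pval p i & i < pinv p j].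

Definition ess n (p : 'S_n) (i j : nat) : bool :=
  [&& diag p i j, ~~ diag p i.+1 j & ~~ diag p i j.+1].

Definition rank n (p : 'S_n) (i j : nat) : nat :=
  #|[set k : 'I_n | (k < i) && (p k < j)]|.

Definition ess_star n (p : 'S_n) (i j : nat) : bool :=
  (ess p i j && (rank p i j != 1)) || (ess p i.+1 j.+1 && (rank p i.+1 j.+1 == 1)).

Definition avoids n (p : 'S_n) (t : seq nat) : Prop :=
  ~ exists f : 'I_(size t) -> 'I_n,
      (forall a b : 'I_(size t), a < b -> f a < f b) /\
      (forall a b : 'I_(size t), (p (f a) < p (f b)) = (nth 0 t a < nth 0 t b)).

Definition schroder n (p : 'S_n) : Prop :=
  avoids p [:: 1; 2; 4; 3] /\ avoids p [:: 2; 1; 4; 3].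

(* In a Schroder permutation every square of the diagram has rank at most 1:
   two dots north-west of a diagram square (i, j), together with the dot in
   row i and the dot in column j, would form a 1243 or a 2143.  Moreover the
   rank strictly increases from an essential square to any other diagram
   square south-east of it.  Hence E*(p), made of the essential squares of
   rank 0 and of the rank-1 ones moved one step north-west, is an antichain
   of the product order, and each of its squares (a, b) satisfies
   a + b + 2 <= n.  Such an antichain is the set of outer corners of a
   partition lambda with lambda_i <= n - 1 - i, and the greedy permutation
   s_i = least value >= lambda_i not taken by s_0, ..., s_(i-1) has diagram
   exactly lambda.  So its diagram squares all have rank 0 (s avoids 132) and
   its essential set, the corners of lambda, is E*(p). *)

From Pilot Require Import Defs.
From mathcomp Require Import all_boot all_fingroup.
From mathcomp Require Import zify.
(* Re-import so that [pval] is [Defs.pval] and not the one of perm.v. *)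
Import Defs.
Set Implicit Arguments. Unset Strict Implicit. Unset Printing Implicit Defensive.

Lemma card_ord_ltn n m : m <= n -> #|[set k : 'I_n | k < m]| = m.
Proof.
move=> le_mn.
have inj_w : injective (widen_ord le_mn) by move=> x y /(congr1 val) eq_xy; apply: val_inj.
rewrite -[RHS]card_ord -(card_imset _ inj_w); apply: eq_card => k; rewrite inE.
apply/idP/imsetP => [lt_km | [x _ ->] /=]; last exact: ltn_ord.
by exists (Ordinal lt_km) => //; apply: val_inj.
Qed.

Section PermutationArray.
Variables (n : nat) (p : 'S_n).
Local Notation P := (pval p).
Local Notation Q := (pinv p).

Lemma pvalE i (lt_in : i < n) : P i = p (Ordinal lt_in).
Proof. by rewrite /pval insubT. Qed.

Lemma pinvE j (lt_jn : j < n) : Q j = (p^-1)%g (Ordinal lt_jn).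
Proof. by rewrite /pinv insubT. Qed.

Lemma pval_ord (k : 'I_n) : P k = p k.
Proof. by rewrite (pvalE (ltn_ord k)); congr (val (p _)); apply: val_inj. Qed.

Lemma pval_lt i : i < n -> P i < n.
Proof. by move=> lt_in; rewrite (pvalE lt_in). Qed.

Lemma pinv_lt j : j < n -> Q j < n.
Proof. by move=> lt_jn; rewrite (pinvE lt_jn). Qed.

Lemma pvalK i : i < n -> Q (P i) = i.
Proof.
move=> lt_in; rewrite (pvalE lt_in) (pinvE (ltn_ord _)).
by rewrite (_ : Ordinal _ = p (Ordinal lt_in)) ?permK //; apply: val_inj.
Qed.

Lemma pinvK j : j < n -> P (Q j) = j.
Proof.
move=> lt_jn; rewrite (pinvE lt_jn) (pvalE (ltn_ord _)).
by rewrite (_ : Ordinal _ = (p^-1)%g (Ordinal lt_jn)) ?permKV //; apply: val_inj.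
Qed.

Lemma pval_inj i i' : i < n -> i' < n -> P i = P i' -> i = i'.
Proof. by move=> lt_in lt_i'n eqP; rewrite -(pvalK lt_in) -(pvalK lt_i'n) eqP. Qed.

Lemma rank_eq0P i j : rank p i j = 0 <-> forall k, k < i -> k < n -> j <= P k.
Proof.
split=> [/card0_eq rank0 k lt_ki lt_kn | rank0].
  by have := rank0 (Ordinal lt_kn); rewrite !inE lt_ki -(pvalE lt_kn) => /negbT; rewrite -leqNgt.
apply: eq_card0 => k; rewrite !inE -pval_ord.
by case: (ltnP k i) => //= lt_ki; rewrite ltnNge rank0 ?ltn_ord.
Qed.

Lemma rank_mono a b c d : a <= c -> b <= d -> rank p a b <= rank p c d.
Proof.
move=> le_ac le_bd; apply/subset_leq_card/subsetP => k; rewrite !inE; lia.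
Qed.

Lemma rank_lt_dot a b c d k : a <= c -> b <= d -> k < n -> k < c -> P k < d ->
  (a <= k) || (b <= P k) -> rank p a b < rank p c d.
Proof.
move=> le_ac le_bd lt_kn lt_kc lt_Pkd new_k; apply/proper_card; rewrite properE.
apply/andP; split; first by apply/subsetP => x; rewrite !inE; lia.
apply/subsetPn; exists (Ordinal lt_kn); rewrite !inE /= -(pvalE lt_kn); lia.
Qed.

Lemma rank_diagS i j : diag p i j -> rank p i.+1 j.+1 = rank p i j.
Proof.
case/and4P=> lt_in lt_jn lt_jPi lt_iQj; apply: eq_card => k; rewrite !inE -pval_ord.
have [eq_Pkj | ne_Pkj] := eqVneq (P k) j.
  by move: lt_iQj; rewrite -eq_Pkj pvalK //; lia.
have [eq_ki | ne_ki] := eqVneq (k : nat) i; first by rewrite eq_ki; lia.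
lia.
Qed.

Lemma diag_rank_bound i j : diag p i j -> i + j + 2 <= n + rank p i j.
Proof.
case/and4P=> lt_in lt_jn lt_jPi lt_iQj.
pose above := p @^-1: [set v : 'I_n | j < v].
have sub : [set k : 'I_n | k < i.+1] \subset [set k : 'I_n | (k < i) && (p k < j)] :|: above.
  apply/subsetP => k; rewrite !inE ltnS -pval_ord => le_ki.
  have ne_Pkj : P k != j by apply: contraTneq lt_iQj => <-; rewrite pvalK //; lia.
  by case: (eqVneq (k : nat) i) => [eq_ki | ne_ki]; [rewrite eq_ki|]; lia.
have card_above : #|above| = n - j.+1.
  rewrite card_preimset; last exact: perm_inj.
  have -> : [set v : 'I_n | j < v] = ~: [set v : 'I_n | v < j.+1].
    by apply/setP => v; rewrite !inE -leqNgt.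
  have := cardsC [set v : 'I_n | v < j.+1]; rewrite card_ord_ltn // card_ord => sum_n.
  by apply/eqP; rewrite -(eqn_add2l j.+1) subnKC // sum_n.
by have := subset_leq_card sub; rewrite card_ord_ltn // cardsU card_above /rank; lia.
Qed.

Lemma ess_diag i j : ess p i j -> diag p i j.
Proof. by case/and3P. Qed.

Lemma essE i j : ess p i j = [&& diag p i j, P i.+1 <= j & Q j.+1 <= i].
Proof.
rewrite /ess; case diag_ij: (diag p i j) => //=.
move/and4P: diag_ij => [lt_in lt_jn lt_jPi lt_iQj].
have lt_Qjn := pinv_lt lt_jn; have lt_Pin := pval_lt lt_in.
congr andb; rewrite /diag.
  rewrite lt_jn (_ : i.+1 < n) /=; last by lia.
  have [eq_Qj | ne_Qj] := eqVneq (Q j) i.+1; first by rewrite -eq_Qj pinvK // ltnn leqnn.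
  by rewrite (_ : i.+1 < Q j) ?andbT -?leqNgt //; lia.
rewrite lt_in (_ : j.+1 < n) /=; last by lia.
have [eq_Pi | ne_Pi] := eqVneq (P i) j.+1; first by rewrite -eq_Pi pvalK // ltnn leqnn.
by rewrite (_ : j.+1 < P i) -?leqNgt //; lia.
Qed.

Lemma ess_row_dot a b c d : ess p a b -> diag p c d -> a < c -> b <= d ->
  [/\ a.+1 < c, P a.+1 < d & P a.+1 <= b].
Proof.
rewrite essE => /and3P[_ le_Pa1b _] /and4P[lt_cn lt_dn lt_dPc lt_cQd] lt_ac le_bd.
have ne_a1c : a.+1 != c by apply: contraTneq lt_dPc => <-; lia.
have ne_Pa1d : P a.+1 != d by apply: contraTneq lt_cQd => <-; rewrite pvalK; lia.
split=> //; lia.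
Qed.

Lemma ess_col_dot a b c d : ess p a b -> diag p c d -> a <= c -> b < d ->
  [/\ Q b.+1 < c, b.+1 < d & Q b.+1 <= a].
Proof.
rewrite essE => /and3P[_ _ le_Qb1a] /and4P[lt_cn lt_dn lt_dPc lt_cQd] le_ac lt_bd.
have ne_Qb1c : Q b.+1 != c by apply: contraTneq lt_dPc => <-; rewrite pinvK; lia.
have ne_b1d : b.+1 != d by apply: contraTneq lt_cQd => <-; lia.
split=> //; lia.
Qed.

Lemma ess_rank_lt a b c d : ess p a b -> diag p c d -> a <= c -> b <= d ->
  (a != c) || (b != d) -> rank p a b < rank p c d.
Proof.
move=> ess_ab diag_cd le_ac le_bd ne_ab_cd; case/and4P: (diag_cd) => lt_cn lt_dn _ _.
have [lt_ac | ge_ac] := ltnP a c.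
  have [lt_a1c lt_Pa1d _] := ess_row_dot ess_ab diag_cd lt_ac le_bd.
  by apply: (rank_lt_dot (k := a.+1)) => //; lia.
have lt_bd : b < d by lia.
have [lt_Qb1c lt_b1d _] := ess_col_dot ess_ab diag_cd le_ac lt_bd.
by apply: (rank_lt_dot (k := Q b.+1)) => //; rewrite ?pinvK; lia.
Qed.

Lemma diag_rank0_avoids132 :
  (forall i j, diag p i j -> rank p i j = 0) -> avoids p [:: 1; 3; 2].
Proof.
move=> rank0 [f [f_mono f_val]].
pose a0 := f ord0; pose a1 := f (inord 1); pose a2 := f (inord 2).
have lt01 : a0 < a1 by apply: f_mono; rewrite /= inordK.
have lt12 : a1 < a2 by apply: f_mono; rewrite /= !inordK.
have lt02 : p a0 < p a2 by have := f_val ord0 (inord 2); rewrite /= inordK.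
have lt21 : p a2 < p a1 by have := f_val (inord 2) (inord 1); rewrite /= !inordK.
have diag12 : diag p a1 (p a2)
  by rewrite /diag !ltn_ord -!pval_ord pvalK // !pval_ord lt21 lt12.
have /rank_eq0P rank12 := rank0 _ _ diag12.
by have := rank12 a0 lt01 (ltn_ord a0); rewrite !pval_ord; lia.
Qed.

End PermutationArray.

Lemma occurrence_not_avoids n (p : 'S_n) (t o : seq nat) :
  size o = size t -> sorted ltn o -> all (gtn n) o ->
  (forall a b, a < size t -> b < size t ->
     (pval p (nth 0 o a) < pval p (nth 0 o b)) = (nth 0 t a < nth 0 t b)) ->
  ~ avoids p t.
Proof.
move=> size_o sorted_o /all_nthP lt_on order_o; apply.
have lt_oa_n (a : 'I_(size t)) : nth 0 o a < n by apply: lt_on; rewrite size_o.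
exists (fun a => Ordinal (lt_oa_n a)); split=> [a b lt_ab | a b] /=.
  by apply: (sorted_ltn_nth ltn_trans) => //; rewrite inE size_o.
by rewrite -!pvalE order_o.
Qed.

Section Schroder.
Variables (n : nat) (p : 'S_n).
Hypothesis sch : schroder p.
Local Notation P := (pval p).
Local Notation Q := (pinv p).

Lemma schroder_no_occurrence k1 k2 c d : k1 < k2 -> k2 < c -> c < d -> d < n ->
  P k1 < P d -> P k2 < P d -> P d < P c -> False.
Proof.
case: sch => [av1243 av2143] lt12 lt2c ltcd lt_dn lt1d lt2d ltdc.
have [lt_P12 | lt_P21 | /pval_inj] := ltngtP (P k1) (P k2);
  [move: av1243 | move: av2143 | lia];
  apply: (@occurrence_not_avoids _ _ _ [:: k1; k2; c; d]) => //=; try lia;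
  by move=> [|[|[|[|a]]]] [|[|[|[|b]]]] //= _ _; lia.
Qed.

Lemma schroder_diag_uniq i j k1 k2 : diag p i j ->
  k1 < i -> k2 < i -> P k1 < j -> P k2 < j -> k1 = k2.
Proof.
case/and4P=> lt_in lt_jn lt_jPi lt_iQj.
wlog lt12 : k1 k2 / k1 < k2.
  move=> W lt1i lt2i lt1j lt2j.
  by case: (ltngtP k1 k2) => [lt12 | lt21 | //]; [apply: W | apply/esym/W].
move=> lt1i lt2i lt1j lt2j; exfalso.
have lt_Qjn := pinv_lt p lt_jn.
by apply: (schroder_no_occurrence (c := i) (d := Q j) lt12); rewrite ?pinvK.
Qed.

Lemma schroder_rank_diag_le1 i j : diag p i j -> rank p i j <= 1.
Proof.
move=> diag_ij; apply/card_le1_eqP => x y; rewrite !inE -!pval_ord.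
move=> /andP[lt_xi lt_Pxj] /andP[lt_yi lt_Pyj].
exact/val_inj/(schroder_diag_uniq diag_ij).
Qed.

Lemma schroder_ess_diag_lt a b c d : ess p a b -> diag p c d -> a < c -> b < d -> False.
Proof.
move=> ess_ab diag_cd lt_ac lt_bd; case/and4P: (diag_cd) => _ lt_dn _ _.
have [lt_a1c lt_Pa1d le_Pa1b] := ess_row_dot ess_ab diag_cd lt_ac (ltnW lt_bd).
have [lt_Qb1c lt_b1d le_Qb1a] := ess_col_dot ess_ab diag_cd (ltnW lt_ac) lt_bd.
have := schroder_diag_uniq diag_cd lt_a1c lt_Qb1c lt_Pa1d.
by rewrite pinvK; lia.
Qed.

Lemma ess_starP i j : ess_star p i j ->
  (ess p i j /\ rank p i j = 0) \/ (ess p i.+1 j.+1 /\ rank p i.+1 j.+1 = 1).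
Proof.
case/orP=> /andP[ess_ij rank_ij]; [left | right]; split=> //; last exact/eqP.
by have := schroder_rank_diag_le1 (ess_diag ess_ij); lia.
Qed.

Lemma ess_star_bound a b : ess_star p a b -> a + b + 2 <= n.
Proof.
by case/ess_starP=> -[/ess_diag/diag_rank_bound bound rank_ab]; lia.
Qed.

Lemma ess_star_antichain a b c d : ess_star p a b -> ess_star p c d ->
  a <= c -> b <= d -> a = c /\ b = d.
Proof.
move=> star_ab star_cd le_ac le_bd.
suff: ~~ ((a != c) || (b != d)) by rewrite negb_or !negbK => /andP[/eqP-> /eqP->].
apply/negP => ne_ab_cd.
case: (ess_starP star_ab) (ess_starP star_cd)
  => [[ess_ab rank_ab] | [ess_ab rank_ab]] [[ess_cd rank_cd] | [ess_cd rank_cd]].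
- by have := ess_rank_lt ess_ab (ess_diag ess_cd) le_ac le_bd ne_ab_cd; lia.
- by apply: (schroder_ess_diag_lt ess_ab (ess_diag ess_cd)).
- have := @rank_mono n p a.+1 b.+1 c.+1 d.+1 le_ac le_bd.
  by rewrite [rank p c.+1 _]rank_diagS ?ess_diag //; lia.
- by have := ess_rank_lt ess_ab (ess_diag ess_cd) le_ac le_bd; rewrite !eqSS; lia.
Qed.

End Schroder.

Lemma fresh_exists (u : seq nat) (v : nat) : exists w, (v <= w) && (w \notin u).
Proof.
exists (v + \max_(x <- u) x).+1; apply/andP; split; first by rewrite ltnW // ltnS leq_addr.
by apply/negP => /(@leq_bigmax_seq _ u xpredT id) /(_ isT) /=; lia.
Qed.

Definition least_fresh (u : seq nat) (v : nat) : nat := ex_minn (fresh_exists u v).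

Lemma least_freshP u v : [/\ v <= least_fresh u v, least_fresh u v \notin u &
  forall w, v <= w -> w \notin u -> least_fresh u v <= w].
Proof.
rewrite /least_fresh; case: ex_minnP => m /andP[le_vm fresh_m] min_m.
by split=> // w le_vw fresh_w; apply: min_m; rewrite le_vw.
Qed.

Section DominantPermutation.
Variables (n : nat) (lam : nat -> nat).
Hypothesis lam_bound : forall i, lam i <= n - i.+1.

Fixpoint dominant_prefix k : seq nat :=
  if k is k'.+1 then
    rcons (dominant_prefix k') (least_fresh (dominant_prefix k') (lam k'))
  else [::].

Definition dominant_val i := least_fresh (dominant_prefix i) (lam i).

Lemma dominant_prefixE i : dominant_prefix i = map dominant_val (iota 0 i).
Proof.
by elim: i => // i IH; rewrite -addn1 iotaD map_cat cats1 -IH addn1 add0n.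
Qed.

Lemma dominant_val_ge i : lam i <= dominant_val i.
Proof. by case: (least_freshP (dominant_prefix i) (lam i)). Qed.

Lemma dominant_val_gap i w : lam i <= w < dominant_val i ->
  exists2 k, k < i & dominant_val k = w.
Proof.
case/andP=> le_w lt_w; case: (least_freshP (dominant_prefix i) (lam i)) => _ _ min_i.
have : w \in dominant_prefix i.
  by apply: contraTT lt_w => fresh_w; rewrite -leqNgt min_i.
by rewrite dominant_prefixE => /mapP[k]; rewrite mem_iota => lt_ki ->; exists k.
Qed.

Lemma dominant_val_inj : injective dominant_val.
Proof.
suff fresh k i : k < i -> dominant_val k != dominant_val i.
  by move=> i i' eq_val; case: (ltngtP i i') => // /fresh; rewrite eq_val eqxx.
move=> lt_ki; case: (least_freshP (dominant_prefix i) (lam i)) => _ fresh_i _.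
apply: contraNneq fresh_i => eq_val.
by rewrite -/(dominant_val i) -eq_val dominant_prefixE map_f // mem_iota.
Qed.

Lemma dominant_val_le i : dominant_val i <= lam i + i.
Proof.
have sub : {subset iota (lam i) (dominant_val i - lam i) <= dominant_prefix i}.
  move=> w; rewrite mem_iota => w_range.
  have [k lt_ki <-] : exists2 k, k < i & dominant_val k = w.
    by apply: dominant_val_gap; lia.
  by rewrite dominant_prefixE map_f // mem_iota.
have := uniq_leq_size (iota_uniq _ _) sub.
by rewrite dominant_prefixE size_map !size_iota; lia.
Qed.

Lemma dominant_val_lt i : i < n -> dominant_val i < n.
Proof. by have := dominant_val_le i; have := lam_bound i; lia. Qed.

Definition dominant_fun (x : 'I_n) : 'I_n := Ordinal (dominant_val_lt (ltn_ord x)).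

Lemma dominant_fun_inj : injective dominant_fun.
Proof. by move=> x y /(congr1 val) /dominant_val_inj /val_inj. Qed.

Definition dominant_perm : 'S_n := perm dominant_fun_inj.

Lemma pval_dominant_perm i : i < n -> pval dominant_perm i = dominant_val i.
Proof. by move=> lt_in; rewrite (pvalE _ lt_in) permE. Qed.

Hypothesis lam_noninc : {homo lam : i j /~ i <= j}.

Lemma diag_dominant_perm i j : diag dominant_perm i j = (i < n) && (j < lam i).
Proof.
have lam_lt := lam_bound i.
apply/idP/idP => [/and4P[lt_in lt_jn lt_jPi lt_iQj] | /andP[lt_in lt_ji]].
  set k := pinv _ j in lt_iQj; have lt_kn : k < n := pinv_lt _ lt_jn.
  have val_k : dominant_val k = j by rewrite -pval_dominant_perm // pinvK.
  rewrite pval_dominant_perm // in lt_jPi; rewrite lt_in ltnNge /=; apply/negP => le_j.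
  have [k' lt_k'i] : exists2 k', k' < i & dominant_val k' = j by apply: dominant_val_gap; lia.
  by rewrite -val_k => /dominant_val_inj; lia.
have lt_jn : j < n by lia.
rewrite /diag lt_in lt_jn pval_dominant_perm // (leq_trans lt_ji (dominant_val_ge i)) /=.
set k := pinv _ j; have lt_kn : k < n := pinv_lt _ lt_jn.
have val_k : dominant_val k = j by rewrite -pval_dominant_perm // pinvK.
rewrite ltnNge; apply/negP => le_ki.
by have := lam_noninc le_ki; have := dominant_val_ge k; lia.
Qed.

Lemma rank_dominant_perm i j : diag dominant_perm i j -> rank dominant_perm i j = 0.
Proof.
rewrite diag_dominant_perm => /andP[lt_in lt_ji]; apply/rank_eq0P => k lt_ki lt_kn.
rewrite pval_dominant_perm //.
by have := lam_noninc (ltnW lt_ki); have := dominant_val_ge k; lia.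
Qed.

Lemma ess_dominant_perm i j : ess dominant_perm i j = (j.+1 == lam i) && (lam i.+1 <= j).
Proof.
have := lam_bound i; have := lam_bound i.+1.
rewrite /ess !diag_dominant_perm => lam1_lt lam_lt.
by apply/idP/idP => [/and3P[diag_ij diag_i1j diag_ij1] | /andP[eq_lam le_lam1]]; lia.
Qed.

End DominantPermutation.

Section AntichainShape.
Variables (n : nat) (E : nat -> nat -> bool).
Hypothesis E_bound : forall a b, E a b -> a + b + 2 <= n.
Hypothesis E_antichain :
  forall a b c d, E a b -> E c d -> a <= c -> b <= d -> a = c /\ b = d.

Definition antichain_shape i : nat :=
  \max_(x : 'I_n * 'I_n | E x.1 x.2 && (i <= x.1)) x.2.+1.
Local Notation lam := antichain_shape.

Lemma antichain_shape_ge a b i : E a b -> i <= a -> b.+1 <= lam i.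
Proof.
move=> E_ab le_ia; have := E_bound E_ab => bound.
have lt_an : a < n by lia.
have lt_bn : b < n by lia.
apply: (@leq_bigmax_cond _ _ (fun x : 'I_n * 'I_n => x.2.+1) (Ordinal lt_an, Ordinal lt_bn)).
by rewrite /= E_ab.
Qed.

Lemma antichain_shape_le i m : (forall a b, E a b -> i <= a -> b.+1 <= m) -> lam i <= m.
Proof. by move=> le_m; apply/bigmax_leqP => x /andP[]; apply: le_m. Qed.

Lemma antichain_shape_witness i : 0 < lam i -> exists a b, [/\ E a b, i <= a & lam i = b.+1].
Proof.
move=> gt0; have : 0 < #|[pred x : 'I_n * 'I_n | E x.1 x.2 && (i <= x.1)]|.
  by rewrite lt0n; apply: contraTneq gt0 => /card0_eq empty; rewrite /lam big_pred0.
case/(eq_bigmax_cond (fun x : 'I_n * 'I_n => x.2.+1)) => x /andP[E_x le_ix] max_x.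
by exists x.1, x.2.
Qed.

Lemma antichain_shape_noninc : {homo lam : i j /~ i <= j}.
Proof.
move=> i j le_ij; apply: antichain_shape_le => a b E_ab le_ja.
by apply: antichain_shape_ge; lia.
Qed.

Lemma antichain_shape_bound i : lam i <= n - i.+1.
Proof. by apply: antichain_shape_le => a b /E_bound; lia. Qed.

Lemma antichain_shapeE i j : E i j = (j.+1 == lam i) && (lam i.+1 <= j).
Proof.
apply/idP/andP => [E_ij | [/eqP eq_lam le_lam1]].
  split.
    rewrite eqn_leq (antichain_shape_ge E_ij (leqnn i)) /=.
    apply: antichain_shape_le => a b E_ab le_ia.
    by have [le_bj | lt_jb] := leqP b j; last case: (E_antichain E_ij E_ab le_ia (ltnW lt_jb)); lia.
  apply: antichain_shape_le => a b E_ab lt_ia.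
  by have [lt_bj | le_jb] := ltnP b j; last case: (E_antichain E_ij E_ab (ltnW lt_ia) le_jb); lia.
have [a [b [E_ab le_ia lam_ab]]] : exists a b, [/\ E a b, i <= a & lam i = b.+1].
  by apply: antichain_shape_witness; rewrite -eq_lam.
have [lt_ia | eq_ia] : i < a \/ i = a by lia.
  by have := antichain_shape_ge E_ab lt_ia; lia.
by rewrite eq_ia (_ : j = b) //; lia.
Qed.

Lemma antichain_dominant_perm :
  exists s : 'S_n, (forall i j, ess s i j = E i j) /\ (forall i j, diag s i j -> rank s i j = 0).
Proof.
exists (dominant_perm antichain_shape_bound); split=> i j.
  by rewrite ess_dominant_perm ?antichain_shapeE //; apply: antichain_shape_noninc.
by apply: rank_dominant_perm; apply: antichain_shape_noninc.
Qed.

End AntichainShape.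

Theorem proposition2p6 (n : nat) (p : 'S_n) :
  schroder p ->
  exists s : 'S_n,
    (forall i j : nat, ess s i j = ess_star p i j) /\
    (forall i j : nat, ess s i j -> rank s i j = 0) /\
    avoids s [:: 1; 3; 2].
Proof.
move=> sch.
have [s [ess_s rank_s]] :=
  antichain_dominant_perm (ess_star_bound sch) (ess_star_antichain sch).
exists s; split=> //; split; last exact: diag_rank0_avoids132.
by move=> i j /ess_diag; apply: rank_s.
Qed.
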